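(* Fix $n\ge1$. There exist $c_n>0$ and $\kappa_0>0$ such that for all $0<\kappa<\kappa_0$: for every $j$ with $|j|\le k-1$ and $I_j\neq\emptyset$, $$\min_{x\in I_j}\psi_{n,j}(x)\ge c_n\kappa,$$ and moreover $\psi_{n,k}(a_k)\ge c_n\kappa$ and $\psi_{n,-k}(-a_k)\ge c_n\kappa$.
   Context: Fix $n\ge1$. Let $h_n$ be the physicists' Hermite polynomial $h_n(y)=(-1)^ne^{y^2}\frac{d^n}{dy^n}e^{-y^2}$, $\varphi(y)=e^{-y^2/2}$, $\Psi_n=h_n\varphi$. Let $0\le z_1<z_2<\dots<z_k$ be the nonnegative zeros of $h_n$, where $k=n/2$ if $n$ is even (then $z_1>0$) and $k=(n+1)/2$ if $n$ is odd (then $z_1=0$). For $\kappa>0$ define: $a_1=\lfloor z_1/\kappa\rfloor+1$; $\beta_1=1$ if $z_1=0$ and $\beta_1=z_1/(\kappa(a_1-1))$ otherwise; for $2\le j\le k$, $a_j=\lfloor z_j/(\beta_{j-1}\kappa)\rfloor+1$ and $\beta_j=z_j/(\kappa(a_j-1))$; for $1\le j\le k-1$, $b_j=\lfloor z_{j+1}/(\beta_j\kappa)\rfloor-1$, and $b_k=\infty$. Set $I_j=[a_j,b_j]\cap\mathbb{Z}$ for $1\le j\le k$ (so $I_k=[a_k,\infty)\cap\mathbb{Z}$), $I_{-j}=[-b_j,-a_j]\cap\mathbb{Z}$ and $\beta_{-j}=\beta_j$. If $n$ is even, put $b_0=a_1-2$, $I_0=[-b_0,b_0]\cap\mathbb{Z}$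 and $\beta_0=1$; if $n$ is odd, $I_0=\emptyset$. For $x\in I_j$ set $\psi_{n,j}(x)=|h_n(\beta_j\kappa x)|\,\varphi(\beta_j\kappa x)$. *)

From Stdlib Require Import Reals ZArith Lia Lra.
From Coquelicot Require Import Coquelicot.
Open Scope R_scope.

Definition hermite (n : nat) (y : R) : R :=
  (-1) ^ n * exp (y ^ 2) * Derive_n (fun t => exp (- t ^ 2)) n y.

Definition phi (y : R) : R := exp (- y ^ 2 / 2).

(* k = n/2 (n even), (n+1)/2 (n odd); both equal floor((n+1)/2). *)
Definition kk (n : nat) : nat := ((n + 1) / 2)%nat.

Definition nonneg_zeros (n : nat) (z : nat -> R) : Prop :=
  (forall i j, (1 <= i)%nat -> (i < j)%nat -> (j <= kk n)%nat -> z i < z j) /\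
  (forall j, (1 <= j <= kk n)%nat -> 0 <= z j /\ hermite n (z j) = 0) /\
  (forall y, 0 <= y -> hermite n y = 0 ->
     exists j, (1 <= j <= kk n)%nat /\ y = z j).

(* (a_j, beta_j) for j >= 1 (value at j = 0 is a dummy). *)
Fixpoint abeta (z : nat -> R) (kappa : R) (j : nat) : Z * R :=
  match j with
  | O => (0%Z, 1)
  | S j' =>
      match j' with
      | O =>
          let a := (Int_part (z 1%nat / kappa) + 1)%Z in
          (a, if Req_EM_T (z 1%nat) 0 then 1
              else z 1%nat / (kappa * IZR (a - 1)))
      | S _ =>
          let bprev := snd (abeta z kappa j') in
          let a := (Int_part (z j / (bprev * kappa)) + 1)%Z in
          (a, z j / (kappa * IZR (a - 1)))
      end
  end.

Definition aa (z : nat -> R) (kappa : R) (j : nat) : Z := fst (abeta z kappa j).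
Definition beta (z : nat -> R) (kappa : R) (j : nat) : R := snd (abeta z kappa j).

Definition bb (z : nat -> R) (kappa : R) (j : nat) : Z :=
  (Int_part (z (S j) / (beta z kappa j * kappa)) - 1)%Z.

Definition inI (n : nat) (z : nat -> R) (kappa : R) (j x : Z) : Prop :=
  if (j =? 0)%Z then
    (if Nat.even n then
       let b0 := (aa z kappa 1 - 2)%Z in (- b0 <= x <= b0)%Z
     else False)
  else
    let m := Z.abs_nat j in
    if (0 <? j)%Z then
      (if (m <? kk n)%nat then (aa z kappa m <= x <= bb z kappa m)%Z
       else (aa z kappa m <= x)%Z)
    else
      (if (m <? kk n)%nat then (- bb z kappa m <= x <= - aa z kappa m)%Z
       else (x <= - aa z kappa m)%Z).

Definition betaZ (z : nat -> R) (kappa : R) (j : Z) : R :=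
  if (j =? 0)%Z then 1 else beta z kappa (Z.abs_nat j).

Definition psi (n : nat) (z : nat -> R) (kappa : R) (j x : Z) : R :=
  let y := betaZ z kappa j * kappa * IZR x in
  Rabs (hermite n y) * phi y.

(* The [h_n] are generated by their three-term recurrence.  Since [h_(n+1)' = 2 (n+1) h_n]
   and consecutive [h_n] have no common root, every zero of [h_n] is simple, so [|h_n|]
   grows at least linearly away from it; with compactness this gives [c, d > 0] such that
   [|h_n y| >= c e] whenever [y] lies at depth [e <= d] inside a gap between consecutive
   zeros, or at distance [e] beyond the last one.  The recursion for [a_j, beta_j] keeps
   [1 <= beta_j <= 2^j] and puts [z_j] exactly at [beta_j kappa (a_j - 1)], so the points
   [beta_j kappa x], [x] in [I_j], lie at depth [beta_j kappa >= kappa] inside the gap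
   [(z_j, z_(j+1))] (or [(-z_1, z_1)] for [I_0]) and in a fixed compact set on which [phi]
   is bounded below.  Negative indices follow by parity. *)

From Stdlib Require Import Reals ZArith Lia Lra.
From Coquelicot Require Import Coquelicot.
Open Scope R_scope.

Fixpoint hermite_poly (n : nat) (y : R) : R :=
  match n with
  | O => 1
  | S m =>
      match m with
      | O => 2 * y
      | S p => 2 * y * hermite_poly m y - 2 * INR m * hermite_poly p y
      end
  end.

Lemma hermite_poly_succ n y :
  hermite_poly (S n) y = 2 * y * hermite_poly n y - 2 * INR n * hermite_poly (n - 1) y.
Proof. destruct n; simpl; [ring | rewrite Nat.sub_0_r; reflexivity]. Qed.

Lemma hermite_poly_opp n y : hermite_poly n (- y) = (-1) ^ n * hermite_poly n y.
Proof.
  enough (H : hermite_poly n (- y) = (-1) ^ n * hermite_poly n y /\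
              hermite_poly (S n) (- y) = (-1) ^ S n * hermite_poly (S n) y) by apply H.
  induction n as [|n [IH IHS]]; [simpl; split; ring|].
  split; [exact IHS|].
  rewrite (hermite_poly_succ (S n)), (hermite_poly_succ (S n) y), Nat.sub_succ, Nat.sub_0_r.
  rewrite IH, IHS. simpl. ring.
Qed.

Lemma Rabs_hermite_poly_opp n y : Rabs (hermite_poly n (- y)) = Rabs (hermite_poly n y).
Proof. rewrite hermite_poly_opp, Rabs_mult, pow_1_abs. ring. Qed.

Lemma is_derive_hermite_poly n (y : R) :
  is_derive (hermite_poly n) y (2 * INR n * hermite_poly (n - 1) y).
Proof.
  enough (H : forall y : R, is_derive (hermite_poly n) y (2 * INR n * hermite_poly (n - 1) y) /\
    is_derive (hermite_poly (S n)) y (2 * INR (S n) * hermite_poly n y)) by apply H.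
  induction n as [|n IH]; intro t.
  - split; simpl.
    + replace (2 * 0 * 1) with 0 by ring. apply (is_derive_const 1).
    + replace (2 * 1 * 1) with (2 * 1) by ring. apply is_derive_scal, (is_derive_id t).
  - destruct (IH t) as [D DS]. split; [rewrite Nat.sub_succ, Nat.sub_0_r; exact DS|].
    apply (is_derive_ext (fun u => 2 * (u * hermite_poly (S n) u) -
                                   2 * INR (S n) * hermite_poly n u)).
    { intro u. rewrite (hermite_poly_succ (S n)), Nat.sub_succ, Nat.sub_0_r. simpl. ring. }
    replace (2 * INR (S (S n)) * hermite_poly (S n) t) with
      (2 * (1 * hermite_poly (S n) t + t * (2 * INR (S n) * hermite_poly n t))
       - 2 * INR (S n) * (2 * INR n * hermite_poly (n - 1) t))
      by (rewrite (hermite_poly_succ n), !S_INR; ring).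
    exact (is_derive_minus _ _ t _ _
             (is_derive_scal _ t 2 _ (is_derive_mult (fun u => u) _ t _ _ (is_derive_id t) DS
                                        (fun _ _ => Rmult_comm _ _)))
             (is_derive_scal _ t (2 * INR (S n)) _ D)).
Qed.

Lemma continuity_pt_hermite_poly n y : continuity_pt (hermite_poly n) y.
Proof.
  apply continuity_pt_filterlim, (ex_derive_continuous (V := R_NormedModule)).
  eexists; apply is_derive_hermite_poly.
Qed.

Lemma hermite_poly_no_common_root n a :
  hermite_poly (S n) a = 0 -> hermite_poly n a <> 0.
Proof.
  revert a; induction n as [|n IH]; intros a HS H; [simpl in H; lra|].
  apply (IH a H). rewrite hermite_poly_succ, Nat.sub_succ, Nat.sub_0_r, H in HS.
  assert (0 < INR (S n)) by (apply lt_0_INR; lia). nra.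
Qed.

Lemma Derive_n_gaussian n (t : R) :
  Derive_n (fun u => exp (- u ^ 2)) n t = (-1) ^ n * hermite_poly n t * exp (- t ^ 2).
Proof.
  revert t; induction n as [|n IH]; intro t; [simpl; ring|].
  change (Derive (Derive_n (fun u => exp (- u ^ 2)) n) t =
          (-1) ^ S n * hermite_poly (S n) t * exp (- t ^ 2)).
  rewrite (Derive_ext _ _ t IH).
  apply is_derive_unique.
  replace ((-1) ^ S n * hermite_poly (S n) t * exp (- t ^ 2)) with
    ((-1) ^ n * (2 * INR n * hermite_poly (n - 1) t) * exp (- t ^ 2)
     + (-1) ^ n * hermite_poly n t * (exp (- t ^ 2) * - (2 * t)))
    by (rewrite hermite_poly_succ; simpl; ring).
  apply (is_derive_mult (fun u => (-1) ^ n * hermite_poly n u) (fun u => exp (- u ^ 2))).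
  - apply is_derive_scal, is_derive_hermite_poly.
  - auto_derive; [exact I|]. replace (t * (t * 1)) with (t ^ 2) by ring. ring.
  - intros; apply Rmult_comm.
Qed.

Lemma hermite_eq n y : hermite n y = hermite_poly n y.
Proof.
  unfold hermite. rewrite Derive_n_gaussian.
  replace ((-1) ^ n * exp (y ^ 2) * ((-1) ^ n * hermite_poly n y * exp (- y ^ 2)))
    with (((-1) * (-1)) ^ n * exp (y ^ 2 + - y ^ 2) * hermite_poly n y)
    by (rewrite exp_plus, Rpow_mult_distr; ring).
  replace (y ^ 2 + - y ^ 2) with 0 by ring.
  replace ((-1) * (-1)) with 1 by ring.
  rewrite exp_0, pow1. ring.
Qed.

Definition linear_growth_at (f : R -> R) (a : R) : Prop :=
  exists m r, 0 < m /\ 0 < r /\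
    forall y, Rabs (y - a) <= r -> m * Rabs (y - a) <= Rabs (f y).

Lemma simple_zero_linear_growth (f f' : R -> R) (a : R) :
  (forall t, is_derive f t (f' t)) -> continuity_pt f' a ->
  f a = 0 -> f' a <> 0 -> linear_growth_at f a.
Proof.
  intros Df Cf' fa f'a.
  assert (Hm : 0 < Rabs (f' a) / 2) by (apply Rabs_pos_lt in f'a; lra).
  destruct (proj1 (continuity_pt_locally f' a) Cf' (mkposreal _ Hm)) as [delta Hdelta].
  assert (Hd := cond_pos delta).
  exists (Rabs (f' a) / 2), (delta / 2).
  split; [exact Hm | split; [lra |]].
  intros y Hy.
  destruct (MVT_cor4 f f' a (delta / 2) (fun c _ => Df c) y Hy) as [c [Hfc Hc]].
  rewrite fa, Rminus_0_r in Hfc. rewrite Hfc, Rabs_mult.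
  apply Rmult_le_compat_r; [apply Rabs_pos |].
  assert (Hca : Rabs (f' c - f' a) < Rabs (f' a) / 2)
    by (apply Hdelta; change (Rabs (c - a) < delta); lra).
  pose proof (Rabs_triang_inv (f' a) (f' c)). rewrite Rabs_minus_sym in Hca. lra.
Qed.

Definition linear_lower_bound (f : R -> R) (S : R -> R -> Prop) : Prop :=
  exists c d, 0 < c /\ 0 < d /\
    forall e y, 0 < e <= d -> S e y -> c * e <= Rabs (f y).

Lemma linear_lower_bound_weaken (f : R -> R) (S T : R -> R -> Prop) :
  (forall e y, 0 < e -> T e y -> S e y) -> linear_lower_bound f S -> linear_lower_bound f T.
Proof.
  intros ST [c [d [Hc [Hd H]]]]. exists c, d.
  split; [exact Hc | split; [exact Hd |]]. intros e y He Hy. apply H, ST; tauto.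
Qed.

Lemma linear_lower_bound_or (f : R -> R) (S T : R -> R -> Prop) :
  linear_lower_bound f S -> linear_lower_bound f T ->
  linear_lower_bound f (fun e y => S e y \/ T e y).
Proof.
  intros [c1 [d1 [Hc1 [Hd1 H1]]]] [c2 [d2 [Hc2 [Hd2 H2]]]].
  exists (Rmin c1 c2), (Rmin d1 d2).
  split; [now apply Rmin_glb_lt | split; [now apply Rmin_glb_lt |]].
  pose proof (Rmin_l c1 c2). pose proof (Rmin_r c1 c2).
  pose proof (Rmin_l d1 d2). pose proof (Rmin_r d1 d2).
  intros e y He [Hy | Hy].
  - specialize (H1 e y ltac:(lra) Hy). nra.
  - specialize (H2 e y ltac:(lra) Hy). nra.
Qed.

Lemma linear_lower_bound_exists (f : R -> R) (S : nat -> R -> R -> Prop) (K : nat) :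
  (forall i, (i < K)%nat -> linear_lower_bound f (S i)) ->
  linear_lower_bound f (fun e y => exists i, (i < K)%nat /\ S i e y).
Proof.
  induction K as [|K IH]; intro HS.
  - exists 1, 1. split; [lra | split; [lra |]]. intros e y _ [i [Hi _]]. lia.
  - apply (linear_lower_bound_weaken f
             (fun e y => (exists i, (i < K)%nat /\ S i e y) \/ S K e y)).
    + intros e y _ [i [Hi Hy]]. destruct (Nat.eq_dec i K) as [-> | Hne]; [now right |].
      left. exists i. split; [lia | exact Hy].
    + apply linear_lower_bound_or; [apply IH; intros; apply HS; lia | apply HS; lia].
Qed.

Lemma linear_growth_right (f : R -> R) (a : R) :
  linear_growth_at f a -> linear_lower_bound f (fun e y => y = a + e).
Proof.
  intros [m [r [Hm [Hr H]]]]. exists m, r. split; [exact Hm | split; [exact Hr |]].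
  intros e y He ->. specialize (H (a + e)).
  replace (a + e - a) with e in H by ring. rewrite Rabs_right in H by lra. apply H. lra.
Qed.

(* Near the endpoints the linear growth gives the bound; on the remaining compact
   middle interval [|f|] has a positive minimum, which dominates [c e] for [c] small. *)
Lemma linear_lower_bound_between_zeros (f : R -> R) (a b : R) :
  a < b -> (forall t, continuity_pt f t) ->
  linear_growth_at f a -> linear_growth_at f b ->
  (forall t, a < t < b -> f t <> 0) ->
  linear_lower_bound f (fun e y => a + e <= y <= b - e).
Proof.
  intros Hab Cf [ma [ra [Hma [Hra Na]]]] [mb [rb [Hmb [Hrb Nb]]]] Hnz.
  set (r := Rmin (Rmin ra rb) ((b - a) / 3)).
  assert (Hr0 : 0 < r) by (unfold r; repeat apply Rmin_glb_lt; lra).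
  assert (Hra' : r <= ra) by (unfold r; rewrite <- Rmin_assoc; apply Rmin_l).
  assert (Hrb' : r <= rb) by (unfold r; eapply Rle_trans; [apply Rmin_l | apply Rmin_r]).
  assert (Hr3 : r <= (b - a) / 3) by apply Rmin_r.
  destruct (continuity_ab_min (fun y => Rabs (f y)) (a + r) (b - r) ltac:(lra)
              (fun c _ => continuity_pt_comp _ _ _ (Cf c) (Rcontinuity_abs _)))
    as [t [Hmin Ht]].
  assert (Hft : 0 < Rabs (f t)) by (apply Rabs_pos_lt, Hnz; lra).
  set (c := Rmin (Rmin ma mb) (Rabs (f t) / r)).
  assert (Hc : 0 < c) by (unfold c; repeat apply Rmin_glb_lt; try lra; apply Rdiv_lt_0_compat; lra).
  assert (Hca : c <= ma) by (unfold c; rewrite <- Rmin_assoc; apply Rmin_l).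
  assert (Hcb : c <= mb) by (unfold c; eapply Rle_trans; [apply Rmin_l | apply Rmin_r]).
  assert (Hct : c * r <= Rabs (f t)).
  { assert (c <= Rabs (f t) / r) by apply Rmin_r.
    replace (Rabs (f t)) with (Rabs (f t) / r * r) by (field; lra). nra. }
  exists c, r. split; [exact Hc | split; [exact Hr0 |]].
  intros e y He Hy.
  destruct (Rle_lt_dec y (a + r)) as [Ya | Ya]; [| destruct (Rle_lt_dec (b - r) y) as [Yb | Yb]].
  - specialize (Na y). rewrite Rabs_right in Na by lra.
    assert (ma * (y - a) <= Rabs (f y)) by (apply Na; lra). nra.
  - specialize (Nb y). rewrite Rabs_left1 in Nb by lra.
    assert (mb * - (y - b) <= Rabs (f y)) by (apply Nb; lra). nra.
  - specialize (Hmin y ltac:(lra)). simpl in Hmin. nra.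
Qed.

Lemma hermite_poly_linear_growth n a :
  (1 <= n)%nat -> hermite_poly n a = 0 -> linear_growth_at (hermite_poly n) a.
Proof.
  intros Hn Ha. destruct n as [|p]; [lia |].
  apply (simple_zero_linear_growth _ (fun t => 2 * INR (S p) * hermite_poly p t)); [| | exact Ha |].
  - intro t. pose proof (is_derive_hermite_poly (S p) t) as D.
    rewrite Nat.sub_succ, Nat.sub_0_r in D. exact D.
  - apply continuity_pt_scal, continuity_pt_hermite_poly.
  - apply hermite_poly_no_common_root in Ha. assert (0 < INR (S p)) by (apply lt_0_INR; lia).
    intro E. apply Ha. nra.
Qed.

Lemma kk_pos n : (1 <= n)%nat -> (1 <= kk n)%nat.
Proof. intro Hn. unfold kk. apply Nat.div_le_lower_bound; lia. Qed.

Definition in_zero_gap (n : nat) (z : nat -> R) (e y : R) : Prop :=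
  (exists i, (1 <= i < kk n)%nat /\ z i + e <= y <= z (S i) - e) \/
  - z 1%nat + e <= y <= z 1%nat - e \/
  y = z (kk n) + e.

Section HermiteZeros.

Variables (n : nat) (z : nat -> R).
Hypothesis z_zeros : nonneg_zeros n z.

Lemma zeros_le i j : (1 <= i)%nat -> (i <= j)%nat -> (j <= kk n)%nat -> z i <= z j.
Proof.
  intros Hi Hij Hj. destruct (Nat.eq_dec i j) as [-> | Hne]; [lra |].
  left. apply z_zeros; lia.
Qed.

Lemma zeros_nonneg j : (1 <= j <= kk n)%nat -> 0 <= z j.
Proof. apply z_zeros. Qed.

Lemma zeros_root j : (1 <= j <= kk n)%nat -> hermite_poly n (z j) = 0.
Proof. intro Hj. rewrite <- hermite_eq. apply z_zeros, Hj. Qed.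

Lemma zeros_pos j : (2 <= j <= kk n)%nat -> 0 < z j.
Proof.
  intro Hj. apply Rle_lt_trans with (z 1%nat); [apply zeros_nonneg; lia |].
  apply z_zeros; lia.
Qed.

Lemma nonneg_root_mem_zeros t :
  0 <= t -> hermite_poly n t = 0 -> exists j, (1 <= j <= kk n)%nat /\ t = z j.
Proof. intros Ht E. apply z_zeros; [exact Ht | rewrite hermite_eq; exact E]. Qed.

Lemma hermite_poly_nonzero_gap i t :
  (1 <= i < kk n)%nat -> z i < t < z (S i) -> hermite_poly n t <> 0.
Proof.
  intros Hi Ht E.
  pose proof (zeros_nonneg i ltac:(lia)).
  destruct (nonneg_root_mem_zeros t) as [j [Hj ->]]; [lra | exact E |].
  destruct (le_lt_dec j i).
  - pose proof (zeros_le j i ltac:(lia) ltac:(lia) ltac:(lia)). lra.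
  - pose proof (zeros_le (S i) j ltac:(lia) ltac:(lia) ltac:(lia)). lra.
Qed.

Lemma hermite_poly_nonzero_middle t : - z 1%nat < t < z 1%nat -> hermite_poly n t <> 0.
Proof.
  intros Ht E.
  assert (E' : hermite_poly n (Rabs t) = 0).
  { destruct (Rle_dec 0 t); [rewrite Rabs_right by lra; exact E |].
    rewrite Rabs_left, hermite_poly_opp, E by lra. ring. }
  destruct (nonneg_root_mem_zeros (Rabs t) (Rabs_pos t) E') as [j [Hj Ej]].
  pose proof (zeros_le 1 j ltac:(lia) ltac:(lia) ltac:(lia)).
  assert (Rabs t < z 1%nat) by (apply Rabs_def1; lra). lra.
Qed.

Lemma hermite_linear_lower_bound :
  (1 <= n)%nat -> linear_lower_bound (hermite_poly n) (in_zero_gap n z).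
Proof.
  intro Hn. unfold in_zero_gap. pose proof (kk_pos n Hn) as Hk.
  assert (G : forall a, hermite_poly n a = 0 -> linear_growth_at (hermite_poly n) a)
    by (intros; apply hermite_poly_linear_growth; assumption).
  assert (Tail : linear_lower_bound (hermite_poly n) (fun e y => y = z (kk n) + e))
    by (apply linear_growth_right, G, zeros_root; lia).
  repeat apply linear_lower_bound_or; [| | exact Tail].
  - apply (linear_lower_bound_weaken _ (fun e y =>
             exists i, (i < kk n - 1)%nat /\ z (S i) + e <= y <= z (S (S i)) - e)).
    { intros e y _ [i [Hi Hy]]. exists (i - 1)%nat.
      replace (S (i - 1)) with i by lia. split; [lia | exact Hy]. }
    apply linear_lower_bound_exists. intros i Hi.
    apply linear_lower_bound_between_zeros.
    + apply z_zeros; lia.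
    + apply continuity_pt_hermite_poly.
    + apply G, zeros_root; lia.
    + apply G, zeros_root; lia.
    + intros t Ht. apply (hermite_poly_nonzero_gap (S i)); [lia | exact Ht].
  - destruct (Rlt_dec 0 (z 1%nat)) as [P | P].
    + apply linear_lower_bound_between_zeros; [lra | apply continuity_pt_hermite_poly | | |].
      * apply G. rewrite hermite_poly_opp, zeros_root by lia. ring.
      * apply G, zeros_root; lia.
      * apply hermite_poly_nonzero_middle.
    + refine (linear_lower_bound_weaken _ _ _ _ Tail). intros e y He Hy. lra.
Qed.

End HermiteZeros.

Lemma Int_part_zero : Int_part 0 = 0%Z.
Proof.
  destruct (base_Int_part 0) as [A B].
  assert (C : (Int_part 0 <= 0)%Z) by (apply le_IZR; lra).
  assert (D : (-1 < Int_part 0)%Z) by (apply lt_IZR; lra). lia.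
Qed.

(* One step of the recursion [abeta], with [b = beta_(j-1)] and [x = z_j]. *)
Lemma floor_rescale (x b k : R) : 0 < b -> 0 < k -> 2 * (b * k) <= x ->
  b <= x / (k * IZR (Int_part (x / (b * k)))) <= 2 * b /\
  x / (k * IZR (Int_part (x / (b * k)))) * k * IZR (Int_part (x / (b * k))) = x.
Proof.
  intros Hb Hk Hx.
  set (q := x / (b * k)). set (F := IZR (Int_part q)).
  assert (Hq : q * (b * k) = x) by (unfold q; field; lra).
  assert (Hq2 : 2 <= q) by (apply Rmult_le_reg_r with (b * k); nra).
  destruct (base_Int_part q) as [F1 F2]. fold F in F1, F2.
  assert (E : x / (k * F) = q * b / F) by (rewrite <- Hq; field; lra).
  rewrite E. split; [split |].
  - apply Rmult_le_reg_r with F; [lra |]. field_simplify; nra.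
  - apply Rmult_le_reg_r with F; [lra |]. field_simplify; nra.
  - rewrite <- Hq. field. lra.
Qed.

Section Grid.

Variables (n : nat) (z : nat -> R) (kappa : R).
Hypothesis kappa_pos : 0 < kappa.
Hypothesis z1_nonneg : 0 <= z 1%nat.
Hypothesis z_pos : forall j, (2 <= j <= kk n)%nat -> 0 < z j.
Hypothesis kappa_small : forall j, (1 <= j <= kk n)%nat -> 0 < z j -> 2 ^ kk n * kappa <= z j.

Lemma beta_spec j : (1 <= j <= kk n)%nat ->
  1 <= beta z kappa j <= 2 ^ j /\ beta z kappa j * kappa * (IZR (aa z kappa j) - 1) = z j.
Proof.
  induction j as [|j IH]; intro Hj; [lia |].
  assert (Hpow : 2 ^ S j <= 2 ^ kk n) by (apply Rle_pow; [lra | lia]).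
  destruct j as [|j].
  - unfold beta, aa; cbn [abeta fst snd].
    destruct (Req_EM_T (z 1%nat) 0) as [E | E].
    + rewrite E, Rdiv_0_l, Int_part_zero. simpl. lra.
    + assert (Hz : 2 * (1 * kappa) <= z 1%nat).
      { pose proof (kappa_small 1 ltac:(lia) ltac:(lra)). simpl in Hpow. nra. }
      destruct (floor_rescale _ _ _ Rlt_0_1 kappa_pos Hz) as [B E'].
      rewrite Rmult_1_l in B, E'.
      rewrite Z.add_simpl_r, plus_IZR, Rplus_minus_r. simpl. lra.
  - destruct (IH ltac:(lia)) as [[B1 B2] _].
    assert (Hz : 2 * (beta z kappa (S j) * kappa) <= z (S (S j))).
    { pose proof (kappa_small (S (S j)) ltac:(lia) ltac:(apply z_pos; lia)).
      change (2 ^ S (S j)) with (2 * 2 ^ S j) in Hpow.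
      assert (beta z kappa (S j) * kappa <= 2 ^ S j * kappa) by (apply Rmult_le_compat_r; lra).
      nra. }
    destruct (floor_rescale (z (S (S j))) (beta z kappa (S j)) kappa ltac:(lra) kappa_pos Hz)
      as [B E'].
    unfold beta, aa.
    change (abeta z kappa (S (S j))) with
      ((Int_part (z (S (S j)) / (beta z kappa (S j) * kappa)) + 1)%Z,
       z (S (S j)) / (kappa * IZR (Int_part (z (S (S j)) / (beta z kappa (S j) * kappa)) + 1 - 1))).
    cbn [fst snd]. rewrite Z.add_simpl_r, plus_IZR, Rplus_minus_r.
    change (2 ^ S (S j)) with (2 * 2 ^ S j). split; lra.
Qed.

Lemma grid_in_gap j x : (1 <= j < kk n)%nat -> inI n z kappa (Z.of_nat j) x ->
  z j + beta z kappa j * kappa <= beta z kappa j * kappa * IZR x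
  <= z (S j) - beta z kappa j * kappa.
Proof.
  intros Hj Hx.
  unfold inI in Hx.
  replace (Z.of_nat j =? 0)%Z with false in Hx by (symmetry; apply Z.eqb_neq; lia).
  replace (0 <? Z.of_nat j)%Z with true in Hx by (symmetry; apply Z.ltb_lt; lia).
  rewrite Zabs2Nat.id in Hx.
  replace (j <? kk n)%nat with true in Hx by (symmetry; apply Nat.ltb_lt; lia).
  destruct Hx as [Xa Xb]. apply IZR_le in Xa, Xb.
  destruct (beta_spec j ltac:(lia)) as [[B1 _] Ea].
  set (s := beta z kappa j * kappa) in *.
  assert (Hs : 0 < s) by (unfold s; nra).
  unfold bb in Xb. fold s in Xb. rewrite minus_IZR in Xb.
  destruct (base_Int_part (z (S j) / s)) as [F _].
  assert (Fs : s * (z (S j) / s) = z (S j)) by (field; lra).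
  assert (s * IZR (aa z kappa j) <= s * IZR x) by (apply Rmult_le_compat_l; lra).
  assert (s * IZR x <= s * (z (S j) / s - 1)) by (apply Rmult_le_compat_l; lra).
  split; nra.
Qed.

Lemma grid_at_tail : (1 <= kk n)%nat ->
  beta z kappa (kk n) * kappa * IZR (aa z kappa (kk n))
  = z (kk n) + beta z kappa (kk n) * kappa.
Proof.
  intro Hk. destruct (beta_spec (kk n) ltac:(lia)) as [_ E].
  rewrite <- E. ring.
Qed.

Lemma grid_in_middle x : inI n z kappa 0 x ->
  - z 1%nat + kappa <= kappa * IZR x <= z 1%nat - kappa.
Proof.
  intro Hx. unfold inI in Hx. simpl in Hx.
  destruct (Nat.even n); [| contradiction].
  unfold aa in Hx; cbn [abeta fst] in Hx.
  destruct Hx as [Xa Xb]. apply IZR_le in Xa, Xb.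
  rewrite opp_IZR, minus_IZR, plus_IZR in Xa. rewrite minus_IZR, plus_IZR in Xb.
  destruct (base_Int_part (z 1%nat / kappa)) as [F _].
  assert (Fk : kappa * (z 1%nat / kappa) = z 1%nat) by (field; lra).
  assert (kappa * IZR x <= kappa * (z 1%nat / kappa - 1)) by (apply Rmult_le_compat_l; lra).
  assert (kappa * - (z 1%nat / kappa - 1) <= kappa * IZR x) by (apply Rmult_le_compat_l; lra).
  split; nra.
Qed.

End Grid.

Lemma inI_opp n z kappa j x : inI n z kappa (- j) x -> inI n z kappa j (- x).
Proof.
  unfold inI. destruct j as [| p | p]; simpl; intro H.
  - destruct (Nat.even n); [lia | exact H].
  - destruct (Pos.to_nat p <? kk n)%nat; lia.
  - destruct (Pos.to_nat p <? kk n)%nat; lia.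
Qed.

Lemma phi_opp y : phi (- y) = phi y.
Proof. unfold phi. replace ((- y) ^ 2) with (y ^ 2) by ring. reflexivity. Qed.

Lemma psi_opp n z kappa j x : psi n z kappa (- j) (- x) = psi n z kappa j x.
Proof.
  unfold psi.
  replace (betaZ z kappa (- j)) with (betaZ z kappa j)
    by (unfold betaZ; destruct j; reflexivity).
  rewrite opp_IZR, Ropp_mult_distr_r_reverse, phi_opp, !hermite_eq, Rabs_hermite_poly_opp.
  reflexivity.
Qed.

Lemma betaZ_of_nat z kappa j : (1 <= j)%nat -> betaZ z kappa (Z.of_nat j) = beta z kappa j.
Proof.
  intro Hj. unfold betaZ.
  replace (Z.of_nat j =? 0)%Z with false by (symmetry; apply Z.eqb_neq; lia).
  rewrite Zabs2Nat.id. reflexivity.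
Qed.

Lemma phi_le_of_abs_le y M : Rabs y <= M -> phi M <= phi y.
Proof.
  intro H. unfold phi.
  assert (Hy : y ^ 2 <= M ^ 2) by (apply pow_maj_Rabs; exact H).
  destruct (Rle_lt_or_eq_dec _ _ Hy) as [Hlt | ->]; [| lra].
  left. apply exp_increasing. lra.
Qed.

Lemma hermite_phi_lower_bound n y c e kappa M :
  0 < c -> 0 < kappa <= e -> c * e <= Rabs (hermite_poly n y) -> Rabs y <= M ->
  c * phi M * kappa <= Rabs (hermite n y) * phi y.
Proof.
  intros Hc He Hh HM. rewrite hermite_eq.
  assert (P : 0 < phi M) by apply exp_pos.
  pose proof (phi_le_of_abs_le y M HM).
  assert (c * kappa <= Rabs (hermite_poly n y)) by nra.
  pose proof (Rabs_pos (hermite_poly n y)). nra.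
Qed.

Lemma positive_lower_bound (z : nat -> R) (K : nat) :
  exists zeta, 0 < zeta /\ forall j, (j <= K)%nat -> 0 < z j -> zeta <= z j.
Proof.
  induction K as [|K [zeta [Hzeta H]]].
  - destruct (Rlt_dec 0 (z 0%nat)) as [P | P].
    + exists (z 0%nat). split; [exact P |]. intros j Hj _. replace j with 0%nat by lia. lra.
    + exists 1. split; [lra |]. intros j Hj Pj. replace j with 0%nat in Pj by lia. lra.
  - destruct (Rlt_dec 0 (z (S K))) as [P | P].
    + exists (Rmin zeta (z (S K))). split; [now apply Rmin_glb_lt |].
      intros j Hj Pj. destruct (Nat.eq_dec j (S K)) as [-> | Hne]; [apply Rmin_r |].
      eapply Rle_trans; [apply Rmin_l | apply H; [lia | exact Pj]].
    + exists zeta. split; [exact Hzeta |].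
      intros j Hj Pj. destruct (Nat.eq_dec j (S K)) as [-> | Hne]; [lra |].
      apply H; [lia | exact Pj].
Qed.

Section LowerBound.

Variables (n : nat) (z : nat -> R) (c d kappa : R).
Hypothesis n_pos : (1 <= n)%nat.
Hypothesis z_zeros : nonneg_zeros n z.
Hypothesis c_pos : 0 < c.
Hypothesis hermite_bound :
  forall e y, 0 < e <= d -> in_zero_gap n z e y -> c * e <= Rabs (hermite_poly n y).
Hypothesis kappa_pos : 0 < kappa.
Hypothesis kappa_le_d : 2 ^ kk n * kappa <= d.
Hypothesis kappa_le_z : forall j, (1 <= j <= kk n)%nat -> 0 < z j -> 2 ^ kk n * kappa <= z j.

Let z1_nonneg : 0 <= z 1%nat := zeros_nonneg n z z_zeros 1 (conj (le_n 1) (kk_pos n n_pos)).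

Lemma beta_bounds j : (1 <= j <= kk n)%nat ->
  1 <= beta z kappa j /\ beta z kappa j * kappa <= d.
Proof.
  intro Hj.
  destruct (beta_spec n z kappa kappa_pos z1_nonneg (zeros_pos n z z_zeros) kappa_le_z j Hj)
    as [[B1 B2] _].
  assert (2 ^ j <= 2 ^ kk n) by (apply Rle_pow; [lra | lia]).
  split; [exact B1 |].
  assert (beta z kappa j * kappa <= 2 ^ kk n * kappa) by (apply Rmult_le_compat_r; lra).
  lra.
Qed.

Lemma psi_lower_bound_inner (j : nat) x : (j < kk n)%nat -> inI n z kappa (Z.of_nat j) x ->
  c * phi (z (kk n) + d) * kappa <= psi n z kappa (Z.of_nat j) x.
Proof.
  intros Hj Hx. unfold psi.
  pose proof (kk_pos n n_pos) as Hk.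
  assert (Hzk : 0 <= z (kk n)) by (apply (zeros_nonneg n z z_zeros); lia).
  destruct j as [| j].
  - change (betaZ z kappa (Z.of_nat 0)) with 1. rewrite Rmult_1_l.
    destruct (grid_in_middle n z kappa kappa_pos x Hx) as [Y1 Y2].
    assert (kappa <= d) by (pose proof (pow_R1_Rle 2 (kk n) ltac:(lra)); nra).
    pose proof (zeros_le n z z_zeros 1 (kk n) ltac:(lia) ltac:(lia) ltac:(lia)).
    apply hermite_phi_lower_bound with (e := kappa); [exact c_pos | lra | |].
    + apply hermite_bound; [lra | right; left; lra].
    + apply Rabs_le. lra.
  - rewrite betaZ_of_nat by lia.
    destruct (beta_bounds (S j) ltac:(lia)) as [B1 B2].
    destruct (grid_in_gap n z kappa kappa_pos z1_nonneg (zeros_pos n z z_zeros) kappa_le_z (S j) x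
                ltac:(lia) Hx) as [Y1 Y2].
    pose proof (zeros_nonneg n z z_zeros (S j) ltac:(lia)).
    pose proof (zeros_le n z z_zeros (S (S j)) (kk n) ltac:(lia) ltac:(lia) ltac:(lia)).
    apply hermite_phi_lower_bound with (e := beta z kappa (S j) * kappa);
      [exact c_pos | nra | |].
    + apply hermite_bound; [nra | left; exists (S j); split; [lia | lra]].
    + apply Rabs_le. nra.
Qed.

Lemma psi_lower_bound_tail :
  c * phi (z (kk n) + d) * kappa <= psi n z kappa (Z.of_nat (kk n)) (aa z kappa (kk n)).
Proof.
  pose proof (kk_pos n n_pos) as Hk. unfold psi.
  rewrite betaZ_of_nat by exact Hk.
  rewrite (grid_at_tail n z kappa kappa_pos z1_nonneg (zeros_pos n z z_zeros) kappa_le_z Hk).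
  destruct (beta_bounds (kk n) ltac:(lia)) as [B1 B2].
  assert (Hzk : 0 <= z (kk n)) by (apply (zeros_nonneg n z z_zeros); lia).
  apply hermite_phi_lower_bound with (e := beta z kappa (kk n) * kappa);
    [exact c_pos | nra | |].
  - apply hermite_bound; [nra | right; right; reflexivity].
  - apply Rabs_le. nra.
Qed.

End LowerBound.

Theorem lemma2p8 : forall (n : nat), (1 <= n)%nat ->
  forall z : nat -> R, nonneg_zeros n z ->
  exists c kappa0 : R, 0 < c /\ 0 < kappa0 /\
    forall kappa, 0 < kappa < kappa0 ->
      (forall j : Z, (Z.abs j <= Z.of_nat (kk n) - 1)%Z ->
         (exists x, inI n z kappa j x) ->
         forall x, inI n z kappa j x -> c * kappa <= psi n z kappa j x) /\
      c * kappa <= psi n z kappa (Z.of_nat (kk n)) (aa z kappa (kk n)) /\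
      c * kappa <= psi n z kappa (- Z.of_nat (kk n)) (- aa z kappa (kk n)).
Proof.
  intros n Hn z Hz.
  destruct (hermite_linear_lower_bound n z Hz Hn) as [c [d [Hc [Hd Hb]]]].
  destruct (positive_lower_bound z (kk n)) as [zeta [Hzeta Hzeta_le]].
  assert (P : 0 < 2 ^ kk n) by (apply pow_lt; lra).
  exists (c * phi (z (kk n) + d)), (Rmin zeta d / 2 ^ kk n).
  split; [apply Rmult_lt_0_compat; [exact Hc | apply exp_pos] |].
  split; [apply Rdiv_lt_0_compat; [apply Rmin_glb_lt |]; lra |].
  intros kappa [Hk Hk0].
  assert (Hsmall : 2 ^ kk n * kappa <= Rmin zeta d).
  { apply Rlt_le. rewrite Rmult_comm. apply Rlt_div_r in Hk0; lra. }
  pose proof (Rmin_l zeta d). pose proof (Rmin_r zeta d).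
  assert (Hz' : forall j, (1 <= j <= kk n)%nat -> 0 < z j -> 2 ^ kk n * kappa <= z j).
  { intros j Hj Pj. pose proof (Hzeta_le j ltac:(lia) Pj). lra. }
  pose proof (psi_lower_bound_inner n z c d kappa Hn Hz Hc Hb Hk ltac:(lra) Hz') as Inner.
  pose proof (psi_lower_bound_tail n z c d kappa Hn Hz Hc Hb Hk ltac:(lra) Hz') as Tail.
  split; [| split; [exact Tail | rewrite psi_opp; exact Tail]].
  intros j Hj _ x Hx.
  destruct (Z_le_gt_dec 0 j) as [Hj0 | Hj0].
  - rewrite <- (Z2Nat.id j Hj0) in Hx |- *. apply Inner; [lia | exact Hx].
  - rewrite <- (Z.opp_involutive j), <- (Z.opp_involutive x), psi_opp.
    rewrite <- (Z.opp_involutive j) in Hx. apply inI_opp in Hx.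
    rewrite <- (Z2Nat.id (- j)) in Hx |- * by lia. apply Inner; [lia | exact Hx].
Qed.
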